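(* Let $A$ be a commutative ring. Then there is an exact sequence of abelian groups $$0\longrightarrow \mathfrak{C}(A)\longrightarrow \mathfrak{C}(A_{\mathrm{red}})\longrightarrow \mathfrak{C}\big(T(A)_{\mathrm{red}},T(A_{\mathrm{red}})\big),$$ where $T(A)_{\mathrm{red}}$ is regarded as a subring of $T(A_{\mathrm{red}})$ via the injective map induced by $a/s\mapsto (a+\mathfrak N)/(s+\mathfrak N)$ ($\mathfrak N$ the nilradical of $A$), the first map is induced by the ring map $T(A)\to T(A_{\mathrm{red}})$, $a/s\mapsto (a+\mathfrak N)/(s+\mathfrak N)$, and the second map is induced by $L\mapsto L\,T(A)_{\mathrm{red}}$ for the tower $A_{\mathrm{red}}\subseteq T(A)_{\mathrm{red}}\subseteq T(A_{\mathrm{red}})$.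
   Context: All rings are commutative with identity; $R_{\mathrm{red}}$ is $R$ modulo its nilradical, and $T(R)$ is the total ring of fractions of $R$. For an extension of rings $R\subseteq S$ and $R$-submodules $L,L'$ of $S$, $LL'$ is the $R$-submodule of finite sums $\sum x_ky_k$. An $R$-submodule $L$ of $S$ is an invertible ideal of $R\subseteq S$ if $LL'=R$ for some $R$-submodule $L'$ of $S$; these form an abelian group $\mathscr{G}(R,S)$ and $\mathfrak{C}(R,S)=\mathscr{G}(R,S)/\{Rx:x\in S^\ast\}$. Also $\mathfrak{C}(R)=\mathfrak{C}(R,T(R))$. A morphism of extensions $\phi:(R,S)\to(R',S')$ (a ring map $\phi:S\to S'$ with $\phi(R)\subseteq R'$) induces $\mathfrak{C}(R,S)\to\mathfrak{C}(R',S')$ via $L\mapsto \phi(L)R'$. *)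

From HB Require Import structures.
From mathcomp Require Import all_boot all_algebra.
Set Implicit Arguments. Unset Strict Implicit. Unset Printing Implicit Defensive.
Import GRing.Theory.
Local Open Scope ring_scope.

Section Defs.
Variable S : comPzRingType.

Definition seteq (L M : S -> Prop) := forall z, L z <-> M z.

Definition is_unit (x : S) := exists y : S, x * y = 1.

Definition submod (R L : S -> Prop) :=
  [/\ L 0, (forall x y, L x -> L y -> L (x + y)) &
      (forall r x, R r -> L x -> L (r * x))].

Definition prodset (L M : S -> Prop) : S -> Prop :=
  fun z => exists s : seq (S * S),
    (forall p, p \in s -> L p.1 /\ M p.2) /\ z = \sum_(p <- s) p.1 * p.2.

Definition invertible (R L : S -> Prop) :=
  submod R L /\ exists L', submod R L' /\ seteq (prodset L L') R.

(* L and M have the same class modulo principal invertible ideals R x, x \in S^* *)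
Definition same_class (L M : S -> Prop) :=
  exists x, is_unit x /\ seteq L (fun z => exists m, M m /\ z = x * m).

Definition principal (R L : S -> Prop) := same_class L R.

Definition regular (s : S) := forall a, s * a = 0 -> a = 0.
End Defs.

Definition rng {T U : Type} (f : T -> U) : U -> Prop := fun y => exists x, y = f x.
Definition imset {T U : Type} (f : T -> U) (L : T -> Prop) : U -> Prop :=
  fun y => exists x, L x /\ y = f x.

Definition ext_map {S S' : comPzRingType} (phi : S -> S') (R' : S' -> Prop)
  (L : S -> Prop) : S' -> Prop := prodset (imset phi L) R'.

Definition total_frac {A T : comPzRingType} (i : A -> T) :=
  [/\ injective i, (forall s, regular s -> is_unit (i s)) &
      (forall t, exists a s, regular s /\ t * i s = i a)].

Definition reduction {A B : comPzRingType} (pi : A -> B) :=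
  (forall b, exists a, b = pi a) /\
  (forall a, pi a = 0 <-> exists n, a ^+ n = 0).

(* F induces a well-defined group homomorphism C(R,S) -> C(R',S') *)
Definition class_hom {S S' : comPzRingType} (R : S -> Prop) (R' : S' -> Prop)
  (F : (S -> Prop) -> (S' -> Prop)) :=
  [/\ (forall L, invertible R L -> invertible R' (F L)),
      (forall L M, invertible R L -> invertible R M -> same_class L M ->
         same_class (F L) (F M)) &
      (forall L M, invertible R L -> invertible R M ->
         same_class (F (prodset L M)) (prodset (F L) (F M)))].

Definition exact_0_C_C_C {S1 S2 S3 : comPzRingType}
  (R1 : S1 -> Prop) (R2 : S2 -> Prop) (R3 : S3 -> Prop)
  (F1 : (S1 -> Prop) -> (S2 -> Prop)) (F2 : (S2 -> Prop) -> (S3 -> Prop)) :=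
  [/\ (forall L, invertible R1 L -> principal R2 (F1 L) -> principal R1 L),
      (forall L, invertible R1 L -> principal R3 (F2 (F1 L))) &
      (forall L, invertible R2 L -> principal R3 (F2 L) ->
         exists L0, invertible R1 L0 /\ same_class L (F1 L0))].

From Pilot Require Import Defs.
From HB Require Import structures.
From mathcomp Require Import all_boot all_algebra ring.
From Stdlib Require Import FunctionalExtensionality PropExtensionality ClassicalEpsilon.
Set Implicit Arguments. Unset Strict Implicit. Unset Printing Implicit Defensive.
Import GRing.Theory.
Local Open Scope ring_scope.

(* Let N be the nilradical of A.  The map T(A) -> T(A_red), a/s |-> (a+N)/(s+N), is
   well defined because reduction modulo N preserves regular elements, and its kernel is
   nil, so it reflects units.  Both class maps are induced by morphisms of extensions, and
   the composite is trivial because every invertible ideal of A generates T(A).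
   Exactness at C(A): if L A_red = u A_red, choose x0 in L over u and y0 in the inverse of L
   with x0 y0 over 1; then x0 y0 is a unit of A, so L = x0 A.
   Exactness at C(A_red): if L T(A)_red = u T(A)_red, write 1 = sum p_k q_k with p_k in L and
   q_k in the inverse of L, and lift u^-1 p_k and u q_l to x_k and y_l in T(A) with
   sum x_k y_k = 1.  The idempotent matrix (x_k y_l) has entries in A modulo a nil ideal, so it
   lifts to an idempotent E over A (Newton iteration), and a determinant argument shows that E
   is again of rank one, E = (x'_k y'_l).  The A-module spanned by the x'_k is invertible and
   is mapped onto u^-1 L. *)

Lemma set_ext (T : Type) (L M : T -> Prop) : (forall z, L z <-> M z) -> L = M.
Proof.
by move=> h; apply: functional_extensionality => z; apply: propositional_extensionality.
Qed.

Section Products.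
Variable S : comPzRingType.
Implicit Types (L M N R : S -> Prop) (c x y z : S).

Definition subsemiring R := R 1 /\ submod R R.

Definition scale c L : S -> Prop := fun z => exists m, L m /\ z = c * m.

Lemma submod_sum R L : submod R L -> forall (I : Type) (r : seq I) (P : pred I) F,
  (forall k, P k -> L (F k)) -> L (\sum_(k <- r | P k) F k).
Proof. by case=> L0 LD _ I r P F h; apply: big_ind. Qed.

Lemma submod_mulr R L r x : submod R L -> R r -> L x -> L (x * r).
Proof. by case=> _ _ LM Rr Lx; rewrite mulrC; apply: LM. Qed.

Lemma prodset_ind L M (Q : S -> Prop) : Q 0 -> (forall a b, Q a -> Q b -> Q (a + b)) ->
  (forall x y, L x -> M y -> Q (x * y)) -> forall z, prodset L M z -> Q z.
Proof.
move=> Q0 QD QM z [s [hs ->]]; elim: s hs => [|p s IH] hs; first by rewrite big_nil.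
rewrite big_cons; apply: QD; first by have [] := hs p (mem_head _ _); apply: QM.
by apply: IH => q qs; apply: hs; rewrite in_cons qs orbT.
Qed.

Lemma prodset0 L M : prodset L M 0.
Proof. by exists [::]; rewrite big_nil. Qed.

Lemma prodsetD L M a b : prodset L M a -> prodset L M b -> prodset L M (a + b).
Proof.
move=> [s1 [h1 ->]] [s2 [h2 ->]]; exists (s1 ++ s2); rewrite big_cat; split => // p.
by rewrite mem_cat => /orP[]; [apply: h1 | apply: h2].
Qed.

Lemma prodset_mul L M x y : L x -> M y -> prodset L M (x * y).
Proof.
by move=> Lx My; exists [:: (x, y)]; rewrite big_seq1; split => // p; rewrite inE => /eqP->.
Qed.

Lemma prodset_sum L M (I : Type) (r : seq I) (P : pred I) (F : I -> S) :
  (forall k, P k -> prodset L M (F k)) -> prodset L M (\sum_(k <- r | P k) F k).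
Proof. by move=> h; apply: big_ind => //; [apply: prodset0 | apply: prodsetD]. Qed.

Lemma prodset_ord L M z : prodset L M z ->
  exists n (x y : 'I_n -> S), (forall k, L (x k) /\ M (y k)) /\ z = \sum_k x k * y k.
Proof.
move=> [s [hs ->]]; exists (size s), (fun k => (nth (0, 0) s k).1),
  (fun k => (nth (0, 0) s k).2); split; first by move=> k; apply/hs/mem_nth.
by rewrite (big_nth (0, 0)) big_mkord.
Qed.

Lemma prodsetC L M : prodset L M = prodset M L.
Proof.
suff sub L1 M1 z : prodset L1 M1 z -> prodset M1 L1 z by apply: set_ext => z; split; apply: sub.
move: z; apply: prodset_ind => [|a b|x y Lx My]; [exact: prodset0 | exact: prodsetD |].
by rewrite mulrC; apply: prodset_mul.
Qed.

Lemma prodsetA L M N : prodset (prodset L M) N = prodset L (prodset M N).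
Proof.
apply: set_ext => z; split; move: z; apply: prodset_ind;
  (try exact: prodset0); (try exact: prodsetD).
- move=> u n Lu Nn; move: u Lu; apply: prodset_ind => [|a b ha hb|x y Lx My].
  + by rewrite mul0r; apply: prodset0.
  + by rewrite mulrDl; apply: prodsetD.
  + by rewrite -mulrA; apply/prodset_mul/prodset_mul.
- move=> x u Lx; move: u; apply: prodset_ind => [|a b ha hb|y n My Nn].
  + by rewrite mulr0; apply: prodset0.
  + by rewrite mulrDr; apply: prodsetD.
  + by rewrite mulrA; apply/prodset_mul/Nn/prodset_mul.
Qed.

Lemma prodset_submodl R L M : submod R L -> submod R (prodset L M).
Proof.
move=> [_ _ LM]; split; [exact: prodset0 | exact: prodsetD |].
move=> r z Rr; move: z; apply: prodset_ind => [|a b ha hb|x y Lx My].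
- by rewrite mulr0; apply: prodset0.
- by rewrite mulrDr; apply: prodsetD.
- by rewrite mulrA; apply: prodset_mul => //; apply: LM.
Qed.

Lemma prodset_submodr R L M : submod R M -> submod R (prodset L M).
Proof. by rewrite prodsetC; apply: prodset_submodl. Qed.

Lemma prodset_idr R L : R 1 -> submod R L -> prodset L R = L.
Proof.
move=> R1 sL; apply: set_ext => z; split; last by move=> Lz; rewrite -[z]mulr1; apply: prodset_mul.
have [L0 LD _] := sL; move: z; apply: prodset_ind => // x y Lx Ry; exact: submod_mulr sL Ry Lx.
Qed.

Lemma prodset_scale c L M : prodset (scale c L) M = scale c (prodset L M).
Proof.
apply: set_ext => z; split.
- move: z; apply: prodset_ind => [|_ _ [m1 [h1 ->]] [m2 [h2 ->]]|_ y [m [Lm ->]] My].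
  + by exists 0; rewrite mulr0; split => //; apply: prodset0.
  + by exists (m1 + m2); rewrite mulrDr; split => //; apply: prodsetD.
  + by exists (m * y); rewrite mulrA; split => //; apply: prodset_mul.
- move=> [m [+ ->]]; move: m; apply: prodset_ind => [|a b ha hb|x y Lx My].
  + by rewrite mulr0; apply: prodset0.
  + by rewrite mulrDr; apply: prodsetD.
  + by rewrite mulrA; apply: prodset_mul => //; exists x.
Qed.

Lemma prodset_subsemiringACA R L M : subsemiring R ->
  prodset (prodset L R) (prodset M R) = prodset (prodset L M) R.
Proof.
move=> [R1 sR]; have RR : prodset R R = R by apply: prodset_idr.
by rewrite prodsetA -(prodsetA R) (prodsetC R M) (prodsetA M) RR -prodsetA.
Qed.

Lemma same_class_eq L M : L = M -> same_class L M.
Proof.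
move=> ->; exists 1; split; first by exists 1; rewrite mulr1.
by move=> z; split => [Mz | [m [Mm ->]]]; [exists z; rewrite mul1r | rewrite mul1r].
Qed.

Lemma same_class_scale c d L : c * d = 1 -> same_class L (scale d L).
Proof.
move=> cd; exists c; split; first by exists d.
move=> z; split => [Lz | [_ [[m [Lm ->]] ->]]]; last by rewrite mulrA cd mul1r.
by exists (d * z); split; [exists z | rewrite mulrA cd mul1r].
Qed.

Lemma principal_of_mul_unit R L L' x y r : subsemiring R -> submod R L ->
  prodset L L' = R -> L x -> L' y -> R r -> x * y * r = 1 -> principal R L.
Proof.
move=> [_ [_ _ RM]] sL LL' Lx L'y Rr xyr; exists x; split; first by exists (y * r); rewrite mulrA.
move=> z; split => [Lz | [s [Rs ->]]]; last exact: submod_mulr sL Rs Lx.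
exists (z * y * r); split; first by apply/RM => //; rewrite -LL'; apply: prodset_mul.
by rewrite -[LHS]mulr1 -xyr; ring.
Qed.

End Products.

Section Image.
Variables (S S' : comPzRingType) (phi : {rmorphism S -> S'}).
Implicit Types (L M R : S -> Prop).

Lemma imset_prodset L M :
  Defs.imset phi (prodset L M) = prodset (Defs.imset phi L) (Defs.imset phi M).
Proof.
apply: set_ext => z; split.
- move=> [m [+ ->]]; move: m; apply: prodset_ind => [|a b ha hb|x y Lx My].
  + by rewrite rmorph0; apply: prodset0.
  + by rewrite rmorphD; apply: prodsetD.
  + by rewrite rmorphM; apply: prodset_mul; [exists x | exists y].
- move: z; apply: prodset_ind => [|_ _ [a [ha ->]] [b [hb ->]]|_ _ [x [Lx ->]] [y [My ->]]].
  + by exists 0; rewrite rmorph0; split => //; apply: prodset0.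
  + by exists (a + b); rewrite rmorphD; split => //; apply: prodsetD.
  + by exists (x * y); rewrite rmorphM; split => //; apply: prodset_mul.
Qed.

Lemma imset_scale c L : Defs.imset phi (scale c L) = scale (phi c) (Defs.imset phi L).
Proof.
apply: set_ext => z; split => [[_ [[m [Lm ->]] ->]] | [_ [[m [Lm ->]] ->]]].
- by exists (phi m); rewrite rmorphM; split => //; exists m.
- by exists (c * m); rewrite rmorphM; split => //; exists m.
Qed.

Lemma subsemiring_rng : subsemiring (rng phi).
Proof.
split; first by exists 1; rewrite rmorph1.
split; first by exists 0; rewrite rmorph0.
- by move=> _ _ [x ->] [y ->]; exists (x + y); rewrite rmorphD.
- by move=> _ _ [x ->] [y ->]; exists (x * y); rewrite rmorphM.
Qed.

Lemma rmorph_is_unit x : is_unit x -> is_unit (phi x).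
Proof. by move=> [y xy]; exists (phi y); rewrite -rmorphM xy rmorph1. Qed.

Lemma ext_map_imset R L : R 1 -> submod R L ->
  ext_map phi (Defs.imset phi R) L = Defs.imset phi L.
Proof. by move=> R1 sL; rewrite /ext_map -imset_prodset prodset_idr. Qed.

Variables (R : S -> Prop) (R' : S' -> Prop).
Hypotheses (sR : subsemiring R) (sR' : subsemiring R') (RR' : forall r, R r -> R' (phi r)).

Lemma prodset_imset_subsemiring : prodset (Defs.imset phi R) R' = R'.
Proof.
have [R'1 [R'0 R'D R'M]] := sR'; apply: set_ext => z; split.
- by move: z; apply: prodset_ind => // _ y [x [Rx ->]] R'y; apply: R'M => //; apply: RR'.
- by move=> R'z; rewrite -[z]mul1r; apply: prodset_mul => //; exists 1; rewrite rmorph1; case: sR.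
Qed.

Lemma ext_map_class_hom : class_hom R R' (ext_map phi R').
Proof.
have extM L M : ext_map phi R' (prodset L M) =
    prodset (ext_map phi R' L) (ext_map phi R' M).
  by rewrite /ext_map prodset_subsemiringACA // imset_prodset.
split.
- move=> L [sL [L' [sL' /set_ext LL']]]; split; first exact/prodset_submodr/sR'.2.
  exists (ext_map phi R' L'); split; first exact/prodset_submodr/sR'.2.
  by rewrite -extM LL' /ext_map prodset_imset_subsemiring.
- move=> L M _ _ [x [ux /set_ext LxM]]; exists (phi x); split; first exact: rmorph_is_unit.
  by rewrite LxM /ext_map imset_scale prodset_scale.
- by move=> L M _ _; apply: same_class_eq.
Qed.

End Image.

Section Span.
Variable S : comPzRingType.
Implicit Types (R L M : S -> Prop).

Definition span R n (x : 'I_n -> S) : S -> Prop :=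
  fun z => exists c : 'I_n -> S, (forall k, R (c k)) /\ z = \sum_k x k * c k.

Lemma span_submod R n (x : 'I_n -> S) : submod R R -> submod R (span R x).
Proof.
move=> [R0 RD RM]; split.
- by exists (fun=> 0); split => //; rewrite big1 // => k _; rewrite mulr0.
- move=> _ _ [c [Rc ->]] [d [Rd ->]]; exists (fun k => c k + d k); split => [k|]; first exact: RD.
  by rewrite -big_split; apply: eq_bigr => k _; rewrite mulrDr.
- move=> r _ Rr [c [Rc ->]]; exists (fun k => r * c k); split => [k|]; first exact: RM.
  by rewrite mulr_sumr; apply: eq_bigr => k _; rewrite mulrCA.
Qed.

Lemma span_mem R n (x : 'I_n -> S) k : subsemiring R -> span R x (x k).
Proof.
move=> [R1 [R0 _ _]]; exists (fun l => if l == k then 1 else 0); split => [l|].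
  by case: ifP.
by rewrite (bigD1 k) //= eqxx mulr1 big1 ?addr0 // => l /negbTE->; rewrite mulr0.
Qed.

Lemma span_sub R L n (x : 'I_n -> S) :
  submod R L -> (forall k, L (x k)) -> forall z, span R x z -> L z.
Proof.
by move=> sL Lx _ [c [Rc ->]]; apply: (submod_sum sL) => k _; apply: (submod_mulr sL).
Qed.

Lemma invertible_span R L M n (p q : 'I_n -> S) : submod R L -> prodset L M = R ->
  (forall k, L (p k)) -> (forall k, M (q k)) -> \sum_k p k * q k = 1 -> L = span R p.
Proof.
move=> sL LM Lp Mq pq1; apply: set_ext => z; split; last exact: span_sub.
move=> Lz; exists (fun k => q k * z); split => [k|].
  by rewrite -LM mulrC; apply: prodset_mul.
by rewrite -[LHS]mul1r -pq1 mulr_suml; apply: eq_bigr => k _; rewrite mulrA.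
Qed.

Lemma prodset_span R n (x y : 'I_n -> S) : subsemiring R -> (forall k l, R (x k * y l)) ->
  \sum_k x k * y k = 1 -> prodset (span R x) (span R y) = R.
Proof.
move=> sR xyR xy1; have [R1 [R0 RD RM]] := sR; apply: set_ext => z; split.
- move: z; apply: prodset_ind => // _ _ [c [Rc ->]] [d [Rd ->]].
  rewrite mulr_suml; apply: big_ind => // k _; rewrite mulr_sumr; apply: big_ind => // l _.
  by rewrite mulrACA; apply: (RM); [apply: (xyR) | apply: (RM)].
- move=> Rz; rewrite -[z]mul1r -xy1 mulr_suml; apply: prodset_sum => k _.
  rewrite -mulrA; apply: prodset_mul; first exact: span_mem.
  by have [_ _ sM] := span_submod y sR.2; rewrite mulrC; apply: sM => //; apply: span_mem.
Qed.

Lemma span_invertible R n (x y : 'I_n -> S) : subsemiring R ->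
  (forall k l, R (x k * y l)) -> \sum_k x k * y k = 1 -> invertible R (span R x).
Proof.
move=> sR xyR xy1; split; first exact: span_submod sR.2.
exists (span R y); split; first exact: span_submod sR.2.
by rewrite prodset_span.
Qed.

Lemma span_scale R n (x : 'I_n -> S) v : span R (fun k => v * x k) = scale v (span R x).
Proof.
apply: set_ext => z; split => [[c [Rc ->]] | [_ [[c [Rc ->]] ->]]].
- exists (\sum_k x k * c k); split; first by exists c.
  by rewrite mulr_sumr; apply: eq_bigr => k _; rewrite mulrA.
- exists c; split => //.
  by rewrite mulr_sumr; apply: eq_bigr => k _; rewrite mulrA.
Qed.

End Span.

Lemma imset_span (S S' : comPzRingType) (phi : {rmorphism S -> S'}) R n (x : 'I_n -> S) :
  Defs.imset phi (span R x) = span (Defs.imset phi R) (phi \o x).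
Proof.
apply: set_ext => z; split.
- move=> [_ [[c [Rc ->]] ->]]; exists (phi \o c); split => [k|]; first by exists (c k).
  by rewrite rmorph_sum; apply: eq_bigr => k _; rewrite rmorphM.
- move=> [c [/fin_all_exists [d Rd] ->]].
  exists (\sum_k x k * d k); split; first by exists d; split => // k; case: (Rd k).
  by rewrite rmorph_sum; apply: eq_bigr => k _; rewrite rmorphM; case: (Rd k) => _ ->.
Qed.

Definition nil_kernel (R R' : pzRingType) (f : R -> R') :=
  forall a, f a = 0 -> exists n, a ^+ n = 0.

Definition idem_defect {R : pzRingType} (x : R) : R := x * x - x.

Definition newton_step {R : pzRingType} (x : R) : R := x * x *+ 3 - x * x * x *+ 2.

(* Checked in the commutative ring [{poly int}], then transported to any [x] by evaluation. *)
Lemma idem_defect_newton_poly : idem_defect (newton_step ('X : {poly int})) =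
  idem_defect 'X ^+ 2 * (idem_defect 'X *+ 4 - 3).
Proof. by rewrite /idem_defect /newton_step; ring. Qed.

(* [horner_morph] needs a nontrivial target; [idem_defect_newton] treats the zero ring apart. *)
Section NonTrivialRing.
Variables (R : pzRingType) (R_nz : (1 : R) != 0).

Definition nzR : Type := R.
HB.instance Definition _ := GRing.PzRing.on nzR.
HB.instance Definition _ := GRing.PzSemiRing_isNonZero.Build nzR R_nz.

Lemma idem_defect_newton_nz (x : nzR) :
  idem_defect (newton_step x) = idem_defect x ^+ 2 * (idem_defect x *+ 4 - 3).
Proof.
have cx : commr_rmorph (intr : int -> nzR) x by move=> a; apply: commr_int.
pose h : {rmorphism {poly int} -> nzR} := horner_morph cx.
have hX : h 'X = x := horner_morphX cx.
have := congr1 h idem_defect_newton_poly.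
by rewrite /idem_defect /newton_step !(rmorphB, rmorphMn, rmorphM, rmorphXn, rmorph1) hX.
Qed.

End NonTrivialRing.

Lemma idem_defect_newton (R : pzRingType) (x : R) :
  idem_defect (newton_step x) = idem_defect x ^+ 2 * (idem_defect x *+ 4 - 3).
Proof.
have [R0 | R_nz] := eqVneq (1 : R) 0; last exact: (@idem_defect_newton_nz R R_nz x).
have all0 (y : R) : y = 0 by rewrite -[y]mulr1 R0 mulr0.
by rewrite [LHS]all0 [RHS]all0.
Qed.

(* The nilpotency index of the idempotence defect halves at each Newton step. *)
Lemma idem_defect_newton_iter (R : pzRingType) (x : R) N t :
  idem_defect x ^+ N = 0 -> (N <= 2 ^ t)%N -> idem_defect (iter t newton_step x) = 0.
Proof.
move=> xN; suff nil_t m : (N <= m * 2 ^ t)%N -> idem_defect (iter t newton_step x) ^+ m = 0.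
  by rewrite -[(2 ^ t)%N]mul1n => /nil_t; rewrite expr1.
elim: t m => [|t IH] m /=; first by rewrite expn0 muln1 => /subnK <-; rewrite exprD xN mulr0.
move=> Nm; rewrite idem_defect_newton; set z := idem_defect _.
have zq : GRing.comm (z ^+ 2) (z *+ 4 - 3).
  apply/commr_sym/commrX/commr_sym/commrB; last exact: commr_nat.
  exact/commrMn/commr_refl.
rewrite exprMn_comm // -exprM IH ?mul0r //.
by rewrite (mulnC 2) -mulnA -expnS.
Qed.

Lemma newton_iter_rmorph (R R' : pzRingType) (f : {rmorphism R -> R'}) x t :
  f (x * x) = f x -> f (iter t newton_step x) = f x.
Proof.
move=> fx; elim: t => //= t IH.
by rewrite /newton_step rmorphB !rmorphMn !rmorphM IH -rmorphM fx -rmorphM fx -mulrnBr.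
Qed.

Lemma lift_idempotent (R R' : pzRingType) (f : {rmorphism R -> R'}) x N :
  idem_defect x ^+ N = 0 -> f (x * x) = f x -> exists e, e * e = e /\ f e = f x.
Proof.
move=> xN fx; exists (iter N newton_step x); split; last exact: newton_iter_rmorph.
apply/eqP; rewrite -subr_eq0; apply/eqP/(idem_defect_newton_iter xN).
exact/ltnW/ltn_expl.
Qed.

Section IdealPower.
Variables (A : comPzRingType) (T : finType) (g : T -> A).

Definition monomial (e : {ffun T -> nat}) : A := \prod_q g q ^+ e q.

(* [ideal_pow m] is the [m]-th power of the ideal generated by the [g q]. *)
Definition ideal_pow m (x : A) := exists s : seq (A * {ffun T -> nat}),
  (forall t, t \in s -> m <= \sum_q t.2 q)%N /\ x = \sum_(t <- s) t.1 * monomial t.2.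

Lemma ideal_pow_sum m (I : Type) (r : seq I) (P : pred I) (F : I -> A) :
  (forall k, P k -> ideal_pow m (F k)) -> ideal_pow m (\sum_(k <- r | P k) F k).
Proof.
move=> h; apply: big_ind => //; first by exists [::]; rewrite big_nil.
move=> _ _ [s1 [h1 ->]] [s2 [h2 ->]]; exists (s1 ++ s2); rewrite big_cat; split => // t.
by rewrite mem_cat => /orP[]; [apply: h1 | apply: h2].
Qed.

Lemma ideal_pow_term m (c : A) (e : {ffun T -> nat}) :
  (m <= \sum_q e q)%N -> ideal_pow m (c * monomial e).
Proof. by exists [:: (c, e)]; rewrite big_seq1; split => // t; rewrite inE => /eqP->. Qed.

Lemma ideal_powM a b x y : ideal_pow a x -> ideal_pow b y -> ideal_pow (a + b) (x * y).
Proof.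
move=> [s1 [h1 ->]] [s2 [h2 ->]]; rewrite big_distrl big_seq; apply: ideal_pow_sum => t ts.
rewrite big_distrr big_seq; apply: ideal_pow_sum => t' ts' /=.
have -> : t.1 * monomial t.2 * (t'.1 * monomial t'.2) =
    t.1 * t'.1 * monomial [ffun q => t.2 q + t'.2 q]%N.
  rewrite mulrACA /monomial -big_split; congr (_ * _); apply: eq_bigr => q _.
  by rewrite ffunE exprD.
apply: ideal_pow_term; rewrite (eq_bigr (fun q => t.2 q + t'.2 q)%N) => [|q _]; last first.
  by rewrite ffunE.
by rewrite big_split leq_add ?h1 ?h2.
Qed.

Lemma ideal_pow0 c : ideal_pow 0 c.
Proof.
have -> : c = c * monomial [ffun=> 0%N] by rewrite /monomial big1 ?mulr1 // => q _; rewrite ffunE.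
exact: ideal_pow_term.
Qed.

Lemma ideal_pow_gen q : ideal_pow 1 (g q).
Proof.
pose e : {ffun T -> nat} := [ffun q' => (q' == q) : nat].
have -> : g q = 1 * monomial e.
  rewrite mul1r /monomial (bigD1 q) //= ffunE eqxx big1 ?mulr1 // => q' /negbTE nq.
  by rewrite ffunE nq.
by apply: ideal_pow_term; rewrite (bigD1 q) //= ffunE eqxx.
Qed.

(* Pigeonhole: a monomial of degree > #|T| * p contains some [g q ^+ p]. *)
Lemma ideal_pow_eq0 p m x : (forall q, g q ^+ p = 0) -> (#|T| * p < m)%N ->
  ideal_pow m x -> x = 0.
Proof.
move=> gp ltm [s [hs ->]]; rewrite big_seq big1 // => t ts.
have [q pq | small] := pickP (fun q => p <= t.2 q)%N; last first.
  have : (\sum_q t.2 q <= \sum_(q : T) p)%N.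
    by apply: leq_sum => q _; rewrite ltnW // ltnNge small.
  by rewrite sum_nat_const leqNgt (leq_trans ltm (hs t ts)).
by rewrite /monomial (bigD1 q) //= -(subnK pq) exprD gp !(mulr0, mul0r).
Qed.

End IdealPower.

Lemma mx_nilpotent_entries (A : comPzRingType) n (Z : 'M[A]_n) :
  (forall k l, exists m, Z k l ^+ m = 0) -> exists N, Z ^+ N = 0.
Proof.
move=> nilZ; pose g (q : 'I_n * 'I_n) := Z q.1 q.2.
have /fin_all_exists [m gm] : forall q, exists m, g q ^+ m = 0 by move=> [k l]; apply: nilZ.
pose p := (\sum_q m q)%N.
have gp q : g q ^+ p = 0 by rewrite /p (bigD1 q) //= exprD gm mul0r.
have powZ k a b : ideal_pow g k ((Z ^+ k) a b).
  elim: k a b => [|k IH] a b; first exact: ideal_pow0.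
  rewrite exprSr -mulmxE mxE; apply: ideal_pow_sum => l _.
  by rewrite -addn1; apply: ideal_powM; [apply: IH | apply: (ideal_pow_gen g (l, b))].
exists (#|{: 'I_n * 'I_n}| * p).+1; apply/matrixP => a b.
by rewrite mxE; apply: ideal_pow_eq0 gp (ltnSn _) (powZ _ a b).
Qed.

Lemma lift_idempotent_mx (A B : comPzRingType) (f : {rmorphism A -> B}) n (C : 'M[A]_n) :
  nil_kernel f -> map_mx f (C * C) = map_mx f C ->
  exists E : 'M[A]_n, E * E = E /\ map_mx f E = map_mx f C.
Proof.
move=> kerf fC; have [N ZN] : exists N, idem_defect C ^+ N = 0.
  apply: mx_nilpotent_entries => k l; apply: kerf.
  have : map_mx f (idem_defect C) = 0 by rewrite map_mxB fC subrr.
  by move/matrixP/(_ k l); rewrite !mxE.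
exact: (lift_idempotent (f := map_mx f : {rmorphism 'M[A]_n -> 'M[B]_n}) ZN fC).
Qed.

Section NilKernel.
Variables (S T : comPzRingType) (psi : {rmorphism S -> T}).
Hypothesis kerpsi : nil_kernel psi.

Lemma nil_kernel_unit s : psi s = 1 -> is_unit s.
Proof.
move=> ps1; have [n sn] : exists n, (1 - s) ^+ n = 0.
  by apply: kerpsi; rewrite rmorphB rmorph1 ps1 subrr.
exists (\sum_(k < n) (1 - s) ^+ k).
by have := subrX1 (1 - s) n; rewrite sn sub0r addrAC subrr add0r mulNr => /oppr_inj.
Qed.

(* [1 - D] has a unit determinant, since [psi] maps it to [1]. *)
Lemma mx_fixed_eq0 m n (G : 'M[S]_(m, n)) (D : 'M[S]_n) :
  map_mx psi D = 0 -> G *m D = G -> G = 0.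
Proof.
move=> psiD GD; have [d dd] : is_unit (\det (1%:M - D)).
  by apply: nil_kernel_unit; rewrite -det_map_mx map_mxB map_mx1 psiD subr0 det1.
have : G *m ((1%:M - D) *m \adj (1%:M - D)) = 0.
  by rewrite mulmxA mulmxBr mulmx1 GD subrr mul0mx.
rewrite mul_mx_adj mul_mx_scalar => /(congr1 ( *:%R d)).
by rewrite scalerA mulrC dd scale1r scaler0.
Qed.

Lemma rank_one_idempotent n (E : 'M[S]_n) (X : 'M[S]_(n, 1)) (Y : 'M[S]_(1, n)) :
  E *m E = E -> Y *m X = 1%:M -> map_mx psi E = map_mx psi (X *m Y) ->
  psi ((Y *m E *m X) 0 0) = 1 /\ E *m X *m Y *m E = (Y *m E *m X) 0 0 *: E.
Proof.
move=> EE YX psiE; set w := (Y *m E *m X) 0 0; split.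
  have -> : psi w = map_mx psi (Y *m E *m X) 0 0 by rewrite mxE.
  by rewrite !map_mxM psiE -!map_mxM mulmxA YX mul1mx YX map_mx1 mxE.
pose G := w *: E - E *m X *m Y *m E.
have GX : G *m X = 0.
  rewrite /G /w mulmxBl -scalemxAl -!mulmxA (mulmxA Y) {2}[Y *m E *m X]mx11_scalar.
  by rewrite mul_mx_scalar -scalemxAr subrr.
have GE : G *m E = G by rewrite /G mulmxBl -scalemxAl EE -!mulmxA EE.
have G0 : G = 0.
  apply: (@mx_fixed_eq0 _ _ _ (E - X *m Y)); first by rewrite map_mxB psiE subrr.
  by rewrite mulmxBr GE mulmxA GX mul0mx subr0.
by apply/eqP; rewrite eq_sym -subr_eq0 -/G G0.
Qed.

Variables (A : comPzRingType) (i : {rmorphism A -> S}).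
Hypothesis keri : nil_kernel (psi \o i).

(* Lift the idempotent [X *m Y] along [psi \o i]; the lift is again of rank one. *)
Lemma lift_rank_one n (x y : 'I_n -> S) : \sum_k x k * y k = 1 ->
  (forall k l, exists c, psi (i c) = psi (x k * y l)) ->
  exists x' y' : 'I_n -> S, [/\ forall k l, rng i (x' k * y' l),
    \sum_k x' k * y' k = 1 & forall k, psi (x' k) = psi (x k)].
Proof.
move=> xy1 xyA.
have /fin_all_exists [c hc] : forall q : 'I_n * 'I_n, exists c, psi (i c) = psi (x q.1 * y q.2).
  by move=> q; apply: xyA.
pose X : 'M[S]_(n, 1) := \col_k x k; pose Y : 'M[S]_(1, n) := \row_k y k.
have YX : Y *m X = 1%:M.
  by apply/matrixP => a b; rewrite !ord1 !mxE /= -xy1; apply: eq_bigr => k _; rewrite !mxE mulrC.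
have P2 : X *m Y *m (X *m Y) = X *m Y by rewrite mulmxA -(mulmxA X) YX mulmx1.
pose C : 'M[A]_n := \matrix_(k, l) c (k, l).
have psiC : map_mx (psi \o i) C = map_mx psi (X *m Y).
  by apply/matrixP => k l; rewrite !mxE big_ord1 !mxE; apply: (hc (k, l)).
have [E0 [E0E0 psiE0]] : exists E0 : 'M[A]_n,
    E0 * E0 = E0 /\ map_mx (psi \o i) E0 = map_mx (psi \o i) C.
  by apply: lift_idempotent_mx keri _; rewrite -mulmxE map_mxM psiC -map_mxM P2.
pose E := map_mx i E0.
have EE : E *m E = E by rewrite -map_mxM mulmxE E0E0.
have psiE : map_mx psi E = map_mx psi (X *m Y) by rewrite -map_mx_comp psiE0.
have [psiw EXYE] := rank_one_idempotent EE YX psiE.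
have [w' ww'] := nil_kernel_unit psiw.
exists (fun k => (E *m X) k 0), (fun l => w' * (Y *m E) 0 l); split.
- move=> k l; exists (E0 k l); rewrite /= mulrCA.
  have -> : (E *m X) k 0 * (Y *m E) 0 l = (E *m X *m (Y *m E)) k l.
    by rewrite [RHS]mxE big_ord1.
  by rewrite mulmxA EXYE mxE mulrA (mulrC w') ww' mul1r mxE.
- have <- : (Y *m E *m (E *m X)) 0 0 * w' = 1.
    by rewrite mulmxA -(mulmxA Y) EE.
  rewrite mxE mulr_suml; apply: eq_bigr => k _.
  by rewrite mulrCA mulrC; congr (_ * _); apply: mulrC.
- move=> k; have -> : psi ((E *m X) k 0) = map_mx psi (E *m X) k 0 by rewrite [RHS]mxE.
  by rewrite map_mxM psiE -map_mxM -mulmxA YX mulmx1 !mxE.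
Qed.

End NilKernel.

Section Regular.
Variable S : comPzRingType.

Lemma regular1 : regular (1 : S).
Proof. by move=> a; rewrite mul1r. Qed.

Lemma regularM (x y : S) : regular x -> regular y -> regular (x * y).
Proof. by move=> rx ry a; rewrite -mulrA => /rx /ry. Qed.

Lemma regularX (x : S) n : regular x -> regular (x ^+ n).
Proof. by move=> rx; elim: n => [|n IH]; [apply: regular1 | rewrite exprS; apply: regularM]. Qed.

End Regular.

Section ReducedFractions.
Variables (A TA B TB : comPzRingType) (i : {rmorphism A -> TA})
  (pi : {rmorphism A -> B}) (j : {rmorphism B -> TB}).
Hypotheses (hi : total_frac i) (hpi : reduction pi) (hj : total_frac j).

Lemma regular_pi s : regular s -> regular (pi s).
Proof.
move=> rs b; have [a ->] := hpi.1 b; rewrite -rmorphM => /hpi.2 [n san].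
by apply/hpi.2; exists n; apply: (regularX (n := n) rs); rewrite -exprMn.
Qed.

Lemma psi_data t : exists p : A * A * TB,
  [/\ regular p.1.2, t * i p.1.2 = i p.1.1 & j (pi p.1.2) * p.2 = 1].
Proof.
have [_ _ /(_ t) [a [s [rs tsa]]]] := hi.
have [_ /(_ _ (regular_pi rs)) [u su]] := hj.
by exists (a, s, u).
Qed.

(* [psi (a / s) = pi a / pi s], computed from a chosen fraction representing [t]. *)
Definition psi_fun t : TB :=
  let p := proj1_sig (constructive_indefinite_description _ (psi_data t)) in
  j (pi p.1.1) * p.2.

Lemma psi_spec t a s u : regular s -> t * i s = i a -> j (pi s) * u = 1 ->
  psi_fun t = j (pi a) * u.
Proof.
move=> rs tsa su; rewrite /psi_fun.
case: constructive_indefinite_description => [[[a0 s0] u0] /= [rs0 ts0a0 s0u0]].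
have eq_as : a * s0 = a0 * s.
  by have [i_inj _ _] := hi; apply: i_inj; rewrite !rmorphM -tsa -ts0a0 mulrAC.
have : j (pi a) * j (pi s0) = j (pi a0) * j (pi s) by rewrite -!rmorphM eq_as.
move: su s0u0; move: (j (pi a)) (j (pi a0)) (j (pi s)) (j (pi s0)) => x x0 y y0 su s0u0 jeq.
rewrite -[LHS]mulr1 -su; transitivity (x0 * y * u0 * u); first by ring.
by rewrite -jeq -[RHS]mulr1 -s0u0; ring.
Qed.

Lemma psi_fun_i a : psi_fun (i a) = j (pi a).
Proof. by rewrite (@psi_spec _ a 1 1) ?rmorph1 ?mulr1 //; apply: regular1. Qed.

Lemma psi_is_zmod_morphism : zmod_morphism psi_fun.
Proof.
move=> t1 t2.
have [[[a1 s1] u1] [/= rs1 e1 k1]] := psi_data t1.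
have [[[a2 s2] u2] [/= rs2 e2 k2]] := psi_data t2.
rewrite (psi_spec rs1 e1 k1) (psi_spec rs2 e2 k2).
rewrite (@psi_spec _ (a1 * s2 - a2 * s1) (s1 * s2) (u1 * u2)).
- rewrite !(rmorphB, rmorphM); move: k1 k2.
  move: (j (pi a1)) (j (pi a2)) (j (pi s1)) (j (pi s2)) => x1 x2 y1 y2 k1 k2.
  by rewrite -[x1 * u1]mulr1 -k2 -[x2 * u2]mulr1 -k1; ring.
- exact: regularM.
- by rewrite !(rmorphB, rmorphM) -e1 -e2; move: (i s1) (i s2) => y1 y2; ring.
- by rewrite !rmorphM mulrACA k1 k2 mulr1.
Qed.

Lemma psi_is_monoid_morphism : monoid_morphism psi_fun.
Proof.
split; first by rewrite -(rmorph1 i) psi_fun_i !rmorph1.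
move=> t1 t2.
have [[[a1 s1] u1] [/= rs1 e1 k1]] := psi_data t1.
have [[[a2 s2] u2] [/= rs2 e2 k2]] := psi_data t2.
rewrite (psi_spec rs1 e1 k1) (psi_spec rs2 e2 k2).
rewrite (@psi_spec _ (a1 * a2) (s1 * s2) (u1 * u2)).
- by rewrite !rmorphM mulrACA.
- exact: regularM.
- by rewrite !rmorphM -e1 -e2 mulrACA.
- by rewrite !rmorphM mulrACA k1 k2 mulr1.
Qed.

Lemma exists_psi : exists psi : {rmorphism TA -> TB}, forall a, psi (i a) = j (pi a).
Proof.
pose psi : {rmorphism TA -> TB} := HB.pack psi_fun
  (GRing.isZmodMorphism.Build _ _ psi_fun psi_is_zmod_morphism)
  (GRing.isMonoidMorphism.Build _ _ psi_fun psi_is_monoid_morphism).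
by exists psi; apply: psi_fun_i.
Qed.

End ReducedFractions.

Section Exactness.
Variables (A TA B TB : comPzRingType) (i : {rmorphism A -> TA})
  (pi : {rmorphism A -> B}) (j : {rmorphism B -> TB}) (psi : {rmorphism TA -> TB}).
Hypotheses (hi : total_frac i) (hpi : reduction pi) (hj : total_frac j).
Hypothesis psi_i : forall a, psi (i a) = j (pi a).

Let F1 := ext_map psi (rng j).
Let F2 (L : TB -> Prop) := prodset L (rng psi).

Lemma j_injective : injective j. Proof. by case: hj. Qed.

Lemma rng_j : rng j = Defs.imset psi (rng i).
Proof.
apply: set_ext => z; split => [[b ->] | [_ [[a ->] ->]]]; last by exists (pi a).
by have [a ->] := hpi.1 b; exists (i a); split; [exists a | rewrite psi_i].
Qed.

Lemma prodset_rng_j_psi : prodset (rng j) (rng psi) = rng psi.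
Proof.
rewrite rng_j; apply: prodset_imset_subsemiring; [apply: subsemiring_rng.. |].
by move=> r _; exists r.
Qed.

Lemma pi_nil_kernel : nil_kernel pi.
Proof. by move=> a /hpi.2. Qed.

Lemma psi_i_nil_kernel : nil_kernel (psi \o i).
Proof. by move=> a; rewrite /= psi_i -(rmorph0 j) => /j_injective /hpi.2. Qed.

Lemma psi_nil_kernel : nil_kernel psi.
Proof.
move=> t psit; have [_ s_unit /(_ t) [a [s [rs tsa]]]] := hi.
have [n an] : exists n, a ^+ n = 0.
  by apply: psi_i_nil_kernel; rewrite /= -tsa rmorphM psit mul0r.
have [w sw] := s_unit _ rs; exists n.
by rewrite -[_ ^+ n]mulr1 -(expr1n _ n) -sw exprMn mulrA -exprMn tsa -rmorphXn an rmorph0 !mul0r.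
Qed.

Lemma F1_imset L : submod (rng i) L -> F1 L = Defs.imset psi L.
Proof. by rewrite /F1 rng_j; apply: ext_map_imset; exists 1; rewrite rmorph1. Qed.

Lemma F1_class_hom : class_hom (rng i) (rng j) F1.
Proof.
apply: ext_map_class_hom; [apply: subsemiring_rng.. |].
by move=> _ [a ->]; rewrite psi_i; exists (pi a).
Qed.

Lemma F2_class_hom : class_hom (rng j) (rng psi) F2.
Proof.
have -> : F2 = ext_map (idfun : {rmorphism TB -> TB}) (rng psi).
  apply: functional_extensionality => L; congr prodset.
  by apply: set_ext => z; split => [Lz | [x [Lx ->]]]; first by exists z.
apply: ext_map_class_hom; [apply: subsemiring_rng.. |].
by move=> _ [b ->]; have [a ->] := hpi.1 b; exists (i a); rewrite psi_i.
Qed.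

Lemma ker_F1_trivial L : invertible (rng i) L -> principal (rng j) (F1 L) -> principal (rng i) L.
Proof.
move=> [sL [L' [sL' /set_ext LL']]] [u [_ /set_ext]]; rewrite F1_imset // => psiL.
have [x0 [Lx0 ux0]] : Defs.imset psi L u.
  by rewrite psiL; exists 1; split; [exists 1; rewrite rmorph1 | rewrite mulr1].
have : prodset L L' 1 by rewrite LL'; exists 1; rewrite rmorph1.
case/prodset_ord => n [p [q [pq e1]]].
have /fin_all_exists [a pa] : forall k, exists a, psi (p k) = u * psi (i a).
  move=> k; have : Defs.imset psi L (psi (p k)) by exists (p k); split => //; case: (pq k).
  by rewrite psiL => -[_ [[b ->] ->]]; have [a ->] := hpi.1 b; exists a; rewrite psi_i.
set y0 := \sum_k i (a k) * q k.
have L'y0 : L' y0.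
  have [_ _ L'M] := sL'; apply: (submod_sum sL') => k _.
  by apply: L'M; [exists (a k) | case: (pq k)].
have psi_xy : psi (x0 * y0) = 1.
  rewrite rmorphM -ux0 -(rmorph1 psi) e1 !rmorph_sum mulr_sumr.
  by apply: eq_bigr => k _; rewrite !rmorphM pa mulrA.
have [c xyc] : rng i (x0 * y0) by rewrite -LL'; apply: prodset_mul.
have [c' cc'] : is_unit c.
  apply: (nil_kernel_unit pi_nil_kernel); apply: j_injective.
  by rewrite -psi_i -xyc psi_xy rmorph1.
apply: (principal_of_mul_unit (subsemiring_rng i) sL LL' Lx0 L'y0 (_ : rng i (i c'))).
  by exists c'.
by rewrite xyc -rmorphM cc' rmorph1.
Qed.

Lemma F2_F1_trivial L : invertible (rng i) L -> principal (rng psi) (F2 (F1 L)).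
Proof.
move=> [sL [L' [sL' /set_ext LL']]]; rewrite /F2 F1_imset //; apply: same_class_eq.
apply: set_ext => z; split.
  move: z; have [_ [P0 PD PM]] := subsemiring_rng psi.
  by apply: prodset_ind => // _ _ [x [_ ->]] [t ->]; apply: (PM); [exists x | exists t].
move=> [t ->]; rewrite -[t]mul1r.
suff gen w : prodset L L' w -> prodset (Defs.imset psi L) (rng psi) (psi (w * t)).
  by apply: gen; rewrite LL'; exists 1; rewrite rmorph1.
move: w; apply: prodset_ind => [|a b ha hb|x y Lx _].
- by rewrite mul0r rmorph0; apply: prodset0.
- by rewrite mulrDl rmorphD; apply: prodsetD.
- by rewrite -mulrA rmorphM; apply: prodset_mul; [exists x | exists (y * t)].
Qed.

Lemma F1_span n (x : 'I_n -> TA) : F1 (span (rng i) x) = span (rng j) (psi \o x).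
Proof.
by rewrite F1_imset ?imset_span -?rng_j //; apply: span_submod (subsemiring_rng i).2.
Qed.

Lemma F2_principal_generators L u v : invertible (rng j) L -> u * v = 1 ->
  F2 L = scale u (rng psi) ->
  exists n (p : 'I_n -> TB) (x y : 'I_n -> TA), [/\ L = span (rng j) p,
    \sum_k x k * y k = 1, forall k, psi (x k) = v * p k &
    forall k l, exists c, psi (i c) = psi (x k * y l)].
Proof.
move=> [sL [L' [sL' /set_ext LL']]] uv Lu.
have P1 : rng psi 1 by exists 1; rewrite rmorph1.
have vL l : L l -> exists t, psi t = v * l.
  move=> Ll; have : F2 L l by rewrite -[l]mulr1; apply: prodset_mul.
  by rewrite Lu => -[_ [[t ->] ->]]; exists t; rewrite mulrA (mulrC v) uv mul1r.
have uL' l' : L' l' -> exists t, psi t = u * l'.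
  move=> L'l'; have : prodset (F2 L) L' (u * l').
    by apply: prodset_mul => //; rewrite Lu; exists 1; split => //; rewrite mulr1.
  by rewrite /F2 prodsetA (prodsetC _ L') -prodsetA LL' prodset_rng_j_psi => -[t ->]; exists t.
have : prodset L L' 1 by rewrite LL'; exists 1; rewrite rmorph1.
case/prodset_ord => n [p [q [pq e1]]].
have /fin_all_exists [x px] : forall k, exists t, psi t = v * p k.
  by move=> k; apply: vL; case: (pq k).
have /fin_all_exists [y0 py0] : forall k, exists t, psi t = u * q k.
  by move=> k; apply: uL'; case: (pq k).
have psi_xy0 : psi (\sum_k x k * y0 k) = 1.
  rewrite rmorph_sum [RHS]e1; apply: eq_bigr => k _.
  by rewrite rmorphM px py0 mulrACA (mulrC v) uv mul1r.
have [e e_inv] := nil_kernel_unit psi_nil_kernel psi_xy0.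
have psie : psi e = 1 by rewrite -[LHS]mul1r -psi_xy0 -rmorphM e_inv rmorph1.
exists n, p, x, (fun k => e * y0 k); split => //.
- exact: invertible_span sL LL' (fun k => (pq k).1) (fun k => (pq k).2) (esym e1).
- by rewrite -e_inv mulr_suml; apply: eq_bigr => k _; rewrite mulrCA mulrC.
move=> k l; have : prodset L L' (p k * q l) by apply: prodset_mul; [case: (pq k) | case: (pq l)].
rewrite LL' => -[b pqb]; have [c ebc] := hpi.1 b; exists c.
by rewrite psi_i -ebc -pqb !rmorphM psie mul1r px py0 mulrACA (mulrC v) uv mul1r.
Qed.

Lemma ker_F2_sub_im_F1 L : invertible (rng j) L -> principal (rng psi) (F2 L) ->
  exists L0, invertible (rng i) L0 /\ same_class L (F1 L0).
Proof.
move=> invL [u [[v uv] /set_ext Lu]].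
have [n [p [x [y [Lp xy1 px xyA]]]]] := F2_principal_generators invL uv Lu.
have [x' [y' [x'y'A x'y'1 px']]] := lift_rank_one psi_nil_kernel psi_i_nil_kernel xy1 xyA.
exists (span (rng i) x'); split; first exact: span_invertible (subsemiring_rng i) x'y'A x'y'1.
rewrite F1_span (_ : psi \o x' = fun k => v * p k) ?span_scale -?Lp.
  exact: same_class_scale uv.
by apply: functional_extensionality => k; rewrite /= px' px.
Qed.

End Exactness.

Theorem corollary5p6 (A TA B TB : comPzRingType)
  (i : {rmorphism A -> TA}) (pi : {rmorphism A -> B}) (j : {rmorphism B -> TB}) :
  total_frac i -> reduction pi -> total_frac j ->
  exists psi : {rmorphism TA -> TB},
    (forall a, psi (i a) = j (pi a)) /\
    let F1 := ext_map psi (rng j) in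
    let F2 := fun L : TB -> Prop => prodset L (rng psi) in
    [/\ class_hom (rng i) (rng j) F1,
        class_hom (rng j) (rng psi) F2 &
        exact_0_C_C_C (rng i) (rng j) (rng psi) F1 F2].
Proof.
move=> hi hpi hj; have [psi psi_i] := exists_psi hi hpi hj.
exists psi; split => //=; split.
- exact: F1_class_hom psi_i.
- exact: F2_class_hom hpi psi_i.
- split; [exact: ker_F1_trivial hpi hj psi_i | exact: F2_F1_trivial hpi psi_i |
    exact: ker_F2_sub_im_F1 hi hpi hj psi_i].
Qed.
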